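(* Let $P$ be a poset and $\mathcal{U}$ a join-specification for $P$ such that $\mathcal{I}_{\mathcal{U}}$ is a frame. Let $J$ be a finite non-empty index set and $S_j\subseteq P$ for each $j\in J$. Then $\Gamma_{\mathcal{U}}\big(\bigcap_{j\in J}S_j^\downarrow\big)=\bigcap_{j\in J}\Gamma_{\mathcal{U}}(S_j)$.
   Context: For $S\subseteq P$, $S^\downarrow=\{p\in P:p\le s\text{ for some }s\in S\}$. A join-specification for $P$ is a set $\mathcal{U}\subseteq\wp(P)$ such that $\bigvee S$ exists in $P$ for every $S\in\mathcal{U}$ and $\{p\}\in\mathcal{U}$ for every $p\in P$. A $\mathcal{U}$-ideal is a down-closed $C\subseteq P$ with $\bigvee S\in C$ whenever $S\in\mathcal{U}$, $S\subseteq C$; $\mathcal{I}_{\mathcal{U}}$ is the complete lattice of $\mathcal{U}$-ideals ordered by inclusion; $\Gamma_{\mathcal{U}}(S)$ is the smallest $\mathcal{U}$-ideal containing $S$. *)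

From HB Require Import structures.
From mathcomp Require Import all_boot all_order.
From mathcomp Require Import boolp classical_sets.
Set Implicit Arguments. Unset Strict Implicit. Unset Printing Implicit Defensive.
Import Order.TTheory.
Local Open Scope classical_set_scope.
Local Open Scope order_scope.

Definition downset {d} {P : porderType d} (S : set P) : set P :=
  [set p | exists2 s, S s & p <= s].

Definition is_join {d} {P : porderType d} (S : set P) (x : P) : Prop :=
  (forall s, S s -> s <= x) /\
  (forall y, (forall s, S s -> s <= y) -> x <= y).

Definition join_spec {d} {P : porderType d} (U : set (set P)) : Prop :=
  (forall S, U S -> exists x, is_join S x) /\ (forall p : P, U [set p]).

Definition U_ideal {d} {P : porderType d} (U : set (set P)) (C : set P) : Prop :=
  (forall p q : P, p <= q -> C q -> C p) /\
  (forall S x, U S -> S `<=` C -> is_join S x -> C x).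

Definition I_U {d} {P : porderType d} (U : set (set P)) : set (set P) :=
  [set C | U_ideal U C].

Definition Gamma {d} {P : porderType d} (U : set (set P)) (S : set P) : set P :=
  \bigcap_(C in [set C | U_ideal U C /\ S `<=` C]) C.

Definition is_lub_in {T} (L : set (set T)) (F : set (set T)) (x : set T) : Prop :=
  L x /\ (forall b, F b -> b `<=` x) /\
  (forall y, L y -> (forall b, F b -> b `<=` y) -> x `<=` y).

Definition is_glb_in {T} (L : set (set T)) (F : set (set T)) (x : set T) : Prop :=
  L x /\ (forall b, F b -> x `<=` b) /\
  (forall y, L y -> (forall b, F b -> y `<=` b) -> y `<=` x).

(* A complete lattice L (ordered by inclusion) is a frame: binary meets
   distribute over arbitrary joins,  a /\ \/F = \/ { a /\ b | b in F }. *)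
Definition is_frame {T} (L : set (set T)) : Prop :=
  (forall F, F `<=` L -> exists x, is_lub_in L F x) /\
  (forall F, F `<=` L -> exists x, is_glb_in L F x) /\
  (forall a F j m, L a -> F `<=` L ->
     is_lub_in L F j -> is_glb_in L [set a; j] m ->
     is_lub_in L [set c | exists2 b, F b & is_glb_in L [set a; b] c] m).

(* Meets in the frame I_U are intersections and joins of principal ideals are
   U-closures, so frame distributivity, applied once on each side, gives
   Gamma(A) /\ Gamma(B) <= Gamma(A /\ B) for down-closed A and B: it reduces
   to the intersection of two principal ideals, which lies in A /\ B.  The
   finite case follows by induction, using Gamma(S^down) = Gamma(S). *)

From mathcomp Require Import all_boot all_order.
From mathcomp Require Import boolp classical_sets.
Local Open Scope classical_set_scope.
Local Open Scope order_scope.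
Import Order.TTheory.

Section U_ideals.
Context {d : Order.disp_t} {P : porderType d} (U : set (set P)).

Definition down_closed (A : set P) : Prop :=
  forall p q : P, p <= q -> A q -> A p.

Definition principal (b : P) : set P := [set p | p <= b].

Lemma downset_down_closed (S : set P) : down_closed (downset S).
Proof. by move=> p q pq [s Ss qs]; exists s => //; apply: le_trans qs. Qed.

Lemma sub_downset (S : set P) : S `<=` downset S.
Proof. by move=> s Ss; exists s. Qed.

Lemma principal_U_ideal (b : P) : U_ideal U (principal b).
Proof.
split; first by move=> p q pq qb; apply: le_trans qb.
by move=> S x _ Sb [_ xb]; apply: xb.
Qed.

Lemma U_ideal_bigcap {I} (D : set I) (C : I -> set P) :
  (forall i, D i -> U_ideal U (C i)) -> U_ideal U (\bigcap_(i in D) C i).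
Proof.
move=> idC; split.
- by move=> p q pq Cq i Di; apply: (idC i Di).1 pq (Cq i Di).
- move=> S x US SC jx i Di.
  by apply: (idC i Di).2 US _ jx => s /SC; apply.
Qed.

Lemma U_idealI (C D : set P) :
  U_ideal U C -> U_ideal U D -> U_ideal U (C `&` D).
Proof.
move=> idC idD; split.
- by move=> p q pq [Cq Dq]; split; [apply: idC.1 pq Cq | apply: idD.1 pq Dq].
- move=> S x US SCD jx.
  by split; [apply: idC.2 US _ jx | apply: idD.2 US _ jx] => s /SCD [].
Qed.

Lemma GammaE (A : set P) : Gamma U A = smallest (U_ideal U) A.
Proof. by []. Qed.

Lemma Gamma_U_ideal (A : set P) : U_ideal U (Gamma U A).
Proof. by apply: U_ideal_bigcap => C []. Qed.

Lemma Gamma_subset (A B : set P) : A `<=` B -> Gamma U A `<=` Gamma U B.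
Proof. by apply: sub_smallest2r; exact: Gamma_U_ideal. Qed.

Lemma Gamma_downset (S : set P) : Gamma U (downset S) = Gamma U S.
Proof.
apply/seteqP; split; last by apply: Gamma_subset; exact: sub_downset.
rewrite GammaE; apply: smallest_sub; first exact: Gamma_U_ideal.
by move=> p [s Ss ps]; apply: (Gamma_U_ideal S).1 ps _; exact: sub_gen_smallest.
Qed.

Lemma glb_setI (C D : set P) : U_ideal U C -> U_ideal U D ->
  is_glb_in (I_U U) [set C; D] (C `&` D).
Proof.
move=> idC idD; split; first exact: U_idealI.
split; first by move=> X [->|->] p [].
move=> Y _ YCD p Yp.
by split; [apply: (YCD C) Yp; left | apply: (YCD D) Yp; right].
Qed.

Lemma lub_Gamma_principal (B : set P) :
  is_lub_in (I_U U) (principal @` B) (Gamma U B).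
Proof.
split; first exact: Gamma_U_ideal.
split.
- move=> _ [b Bb <-] p pb.
  by apply: (Gamma_U_ideal B).1 pb _; exact: sub_gen_smallest.
- move=> Y idY BY; rewrite GammaE; apply: smallest_sub => // b Bb.
  by apply: (BY (principal b)); [exists b | rewrite /principal /=].
Qed.

Hypothesis frameU : is_frame (I_U U).

Lemma setI_Gamma_sub (D B Y : set P) : U_ideal U D -> U_ideal U Y ->
  (forall b, B b -> D `&` principal b `<=` Y) -> D `&` Gamma U B `<=` Y.
Proof.
move=> idD idY DBY.
have principalI : principal @` B `<=` I_U U.
  by move=> _ [b _ <-]; exact: principal_U_ideal.
have [_ [_ distr]] := frameU.
have [_ [_ least]] := distr D _ _ _ idD principalI (lub_Gamma_principal B)
  (glb_setI _ _ idD (Gamma_U_ideal B)).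
apply: least => // c [_ [b Bb <-] [_ [glb_le _]]] p cp.
apply: (DBY b Bb); split.
- by apply: (glb_le D) cp; left.
- by apply: (glb_le (principal b)) cp; right.
Qed.

Lemma GammaI (A B : set P) : down_closed A -> down_closed B ->
  Gamma U (A `&` B) = Gamma U A `&` Gamma U B.
Proof.
move=> dcA dcB; apply/seteqP; split.
  by rewrite subsetI; split; apply: Gamma_subset => p [].
apply: setI_Gamma_sub; [exact: Gamma_U_ideal | exact: Gamma_U_ideal |].
move=> b Bb p [Ap pb].
have : (principal b `&` Gamma U A) p by [].
apply: setI_Gamma_sub; [exact: principal_U_ideal | exact: Gamma_U_ideal |].
move=> a Aa q [qb qa]; rewrite GammaE; apply: sub_gen_smallest.
by split; [apply: dcA qa Aa | apply: dcB qb Bb].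
Qed.

Lemma Gamma_big_setI {I} (s : seq I) (A : I -> set P) :
  (forall i, down_closed (A i)) ->
  Gamma U (\big[setI/setT]_(i <- s) A i) =
  \big[setI/setT]_(i <- s) Gamma U (A i).
Proof.
move=> dcA; elim: s => [|i s IHs].
  by rewrite !big_nil; apply/seteqP; split => // p _; exact: sub_gen_smallest.
have dc_big : down_closed (\big[setI/setT]_(j <- s) A j).
  apply: big_ind => [p q _ _ //|B C dcB dcC p q pq [Bq Cq]|//].
  by split; [apply: dcB pq Bq | apply: dcC pq Cq].
by rewrite !big_cons GammaI ?IHs.
Qed.

End U_ideals.

Theorem corollary2p18 (d : Order.disp_t) (P : porderType d)
  (U : set (set P)) (hU : join_spec U) (hframe : is_frame (I_U U))
  (J : finType) (hJ : (0 < #|J|)%N) (S : J -> set P) :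
  Gamma U (\bigcap_(j in [set: J]) downset (S j)) =
  \bigcap_(j in [set: J]) Gamma U (S j).
Proof.
have enumJ : [set: J] = [set` enum J].
  by apply/seteqP; split => j //= _; rewrite mem_enum.
rewrite enumJ !bigcap_seq Gamma_big_setI //; last first.
  by move=> j; exact: downset_down_closed.
by apply: eq_bigr => j _; exact: Gamma_downset.
Qed.
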